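(* In any execution of Algorithm FS (with $T\ge 4$), let $v,w$ be active neighboring nodes in round $t$ with $d_t(v,w)\le 1$, and let $t'>t$ be the first round with $d_{t'}(v,w)>1$. Then $d_{t'+1}(v,w)\le 1$.
   Context: Model (beeping model with arbitrary activations). $G=(V,E)$ finite connected undirected graph; synchronous rounds; in each round each active node either beeps or listens; a listening node learns only whether at least one neighbor beeped. $T\ge 4$; checkpoints $\mathit{CP}=\{c\in\mathbb{N}_0: c\equiv 0\pmod 4,\ T-c>3\}$. Algorithm FS. Each node $v$ stores $\delta(v)\in\{0,\dots,T-1\}$, $\mathit{State}(v)\in\{\mathit{Inactive},\mathit{Beep},\mathit{Listen}\}$, $\mathit{Induced}(v)\in\{\mathit{true},\mathit{false}\}$. Initially all nodes are Inactive. A node $v$ is activated in round $t$ if the adversary activates it in round $t$, or $v$ is inactive and some neighbor beeps in round $t-1$; then at the beginning of round $t$, $\delta(v)=1$, $\mathit{State}(v)=\mathit{Beep}$, $\mathit{Induced}(v)=\mathit{true}$. In each round each active node $v$, according to its state at the beginning of the round: (1) if $\mathit{State}(v)=\mathit{Beep}$: beeps; $\delta(v)\gets\delta(v)+1\bmod T$; $\mathit{State}(v)\gets\mathit{Listen}$; (2) if $\mathit{State}(v)=\mathit{Listen}$ and some neighbor beeps: if $\delta(v)\equiv c-1\pmod T$ for some $c\in\mathit{CP}$, then $\delta(v)\gets\delta(v)+2\bmod T$, $\mathit{State}(v)\gets\mathit{Beep}$, $\mathit{Induced}(v)\gets\mathit{true}$; else $\delta(v)\gets\delta(v)+1\bmod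 T$; (3) if $\mathit{State}(v)=\mathit{Listen}$ and no neighbor beeps: $\delta(v)\gets\delta(v)+1\bmod T$; then if ($\mathit{Induced}(v)=\mathit{true}$ and new $\delta(v)\in\mathit{CP}$) or new $\delta(v)=0$: $\mathit{State}(v)\gets\mathit{Beep}$, $\mathit{Induced}(v)\gets\mathit{false}$. Virtual counter: if $v$ is activated in round $t_0$ then $c_{t_0}(v)=0$, and $c_{t+1}(v)=c_t(v)+a$, where $a\in\{1,2\}$ is the amount added to $\delta(v)$ (before reduction mod $T$) in round $t$. $d_t(v,w)=|c_t(v)-c_t(w)|$. *)

From mathcomp Require Import all_boot.
Set Implicit Arguments. Unset Strict Implicit. Unset Printing Implicit Defensive.

Inductive fstate := Beep | Listen.

(* State of an active node: delta(v) (kept in {0..T-1}), State(v),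
   Induced(v), and the virtual counter c(v). *)
Record node := mkNode { delta : nat; st : fstate; induced : bool; cnt : nat }.

Definition inCP (T c : nat) : bool := (c %% 4 == 0) && (c + 3 < T).

Definition init_node : node := mkNode 1 Beep true 0.

(* One round of Algorithm FS for an active node; [heard] = some neighbor
   beeps in this round. The counter is increased by the amount added to delta. *)
Definition fs_step (T : nat) (s : node) (heard : bool) : node :=
  match st s with
  | Beep => mkNode ((delta s + 1) %% T) Listen (induced s) (cnt s + 1)
  | Listen =>
    if heard then
      if [exists c : 'I_T, inCP T c && ((delta s + 1) %% T == c)] then
        mkNode ((delta s + 2) %% T) Beep true (cnt s + 2)
      else mkNode ((delta s + 1) %% T) Listen (induced s) (cnt s + 1)
    else
      let d' := (delta s + 1) %% T in
      if (induced s && inCP T d') || (d' == 0) then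
        mkNode d' Beep false (cnt s + 1)
      else mkNode d' Listen (induced s) (cnt s + 1)
  end.

Definition beeping (o : option node) : bool :=
  if o is Some s then (if st s is Beep then true else false) else false.

Section Exec.
Variables (T : nat) (V : finType) (e : rel V) (adv : nat -> V -> bool).

(* [config t v] = state of v at the beginning of round t (None = Inactive).
   [adv t v] = the adversary activates v in round t (no effect on an
   already active node). *)
Fixpoint config (t : nat) : V -> option node :=
  match t with
  | 0 => fun v => if adv 0 v then Some init_node else None
  | t'.+1 =>
    let prev := config t' in
    let beeped := fun v => [exists u, e v u && beeping (prev u)] in
    fun v =>
      match prev v with
      | Some s => Some (fs_step T s (beeped v))
      | None => if adv t v || beeped v then Some init_node else None
      end
  end.

Definition active (t : nat) (v : V) : bool := if config t v is Some _ then true else false.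

(* Virtual counter c_t(v) (meaningful only for active v). *)
Definition vcounter (t : nat) (v : V) : nat :=
  if config t v is Some s then cnt s else 0.

Definition dist (t : nat) (v w : V) : nat :=
  (vcounter t v - vcounter t w) + (vcounter t w - vcounter t v).
End Exec.

From mathcomp Require Import all_boot.
From mathcomp Require Import zify.

(* Every round adds 1 or 2 to the virtual counter of an active
   node, and the invariant delta = c + 1 (mod T) holds for every active node.
   Hence if d_s(v,w) <= 1 < d_{s+1}(v,w), then d_s = 1 and the leading node a
   added 2 while the follower b added 1.  Adding 2 only happens to a listening
   node at a pre-checkpoint (delta = c - 1 for a checkpoint c) that hears a
   beep, and it then beeps in round s+1.  By the invariant, the follower's
   delta in round s+1 is that same pre-checkpoint value; such a value is
   neither a checkpoint nor 0, so b is listening in round s+1, hears a's beep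
   and adds 2, while a adds 1: the distance is 1 again in round s+2.
   The file first studies one step [fs_step] of a single node, then lifts the
   facts to executions [config], and finally combines them. *)

Set Implicit Arguments. Unset Strict Implicit. Unset Printing Implicit Defensive.

(* delta = c - 1 (mod T) for some checkpoint c: the condition under which a
   listening node that hears a beep jumps by 2. *)
Definition pre_checkpoint (T d : nat) : bool :=
  [exists c : 'I_T, inCP T c && ((d + 1) %% T == c)].

Section OneStep.
Variable T : nat.

Lemma fs_step_cnt (s : node) (h : bool) :
  cnt (fs_step T s h) = cnt s + 1 \/ cnt (fs_step T s h) = cnt s + 2.
Proof.
rewrite /fs_step; case: (st s); first by left.
by case: h; case: ifP; by [left | right].
Qed.

Lemma fs_step_delta (s : node) (h : bool) : delta s = (cnt s + 1) %% T ->
  delta (fs_step T s h) = (cnt (fs_step T s h) + 1) %% T.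
Proof.
move=> ds.
have E1 : (delta s + 1) %% T = (cnt s + 1 + 1) %% T by rewrite ds modnDml.
have E2 : (delta s + 2) %% T = (cnt s + 2 + 1) %% T by rewrite ds modnDml -!addnA.
rewrite /fs_step; case: (st s) => //=.
by case: h; case: ifP.
Qed.

Lemma fs_step_jump (s : node) (h : bool) : cnt (fs_step T s h) = cnt s + 2 ->
  [/\ st s = Listen, h, pre_checkpoint T (delta s) & st (fs_step T s h) = Beep].
Proof.
rewrite /fs_step /pre_checkpoint; case: (st s) => /=; first by lia.
by case: h; case: ifP => //= _; lia.
Qed.

Lemma fs_step_beep_cnt (s : node) (h : bool) : st s = Beep ->
  cnt (fs_step T s h) = cnt s + 1.
Proof. by rewrite /fs_step => ->. Qed.

Lemma fs_step_hear_pre_checkpoint (s : node) : st s = Listen ->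
  pre_checkpoint T (delta s) -> cnt (fs_step T s true) = cnt s + 2.
Proof. by rewrite /fs_step /pre_checkpoint => -> ->. Qed.

Lemma pre_checkpoint_not_wake (r : nat) : 0 < T -> r < T ->
  inCP T ((r + 1) %% T) -> ~~ inCP T r && (r != 0).
Proof.
move=> hT hr; rewrite /inCP.
have [lt|eq] : r + 1 < T \/ r + 1 = T by lia.
  rewrite (modn_small lt) => /andP [/eqP h1 h2].
  apply/andP; split; last by lia.
  by apply/negP => /andP [/eqP h3 _]; lia.
by rewrite eq modnn => /andP [_ h2]; lia.
Qed.

(* A node that adds 1 and lands on a pre-checkpoint is listening afterwards:
   the silent transition to Beep would need a checkpoint or 0. *)
Lemma fs_step_pre_checkpoint_listen (s : node) (h : bool) : 0 < T ->
  cnt (fs_step T s h) = cnt s + 1 ->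
  pre_checkpoint T (delta (fs_step T s h)) -> st (fs_step T s h) = Listen.
Proof.
move=> hT; rewrite /fs_step; case: (st s) => //=.
case: h; first by case: ifP => //= _; lia.
case: ifP => // wake _ /existsP [c /andP [cpc /eqP dc]].
have := @pre_checkpoint_not_wake ((delta s + 1) %% T) hT (ltn_pmod _ hT).
rewrite dc cpc => /(_ isT) /andP [/negbTE not_cp /negbTE not_zero].
by move: wake; rewrite not_cp not_zero andbF.
Qed.

Lemma fs_step_catch_up (sa sb : node) (ha hb hb' x : bool) : 0 < T ->
  delta sa = (cnt sa + 1) %% T -> delta sb = (cnt sb + 1) %% T ->
  cnt sa = (cnt sb).+1 ->
  cnt (fs_step T sa ha) = cnt sa + 2 -> cnt (fs_step T sb hb) = cnt sb + 1 ->
  (st (fs_step T sa ha) = Beep -> hb') ->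
  cnt (fs_step T (fs_step T sa ha) x) = cnt sa + 3 /\
  cnt (fs_step T (fs_step T sb hb) hb') = cnt sb + 3.
Proof.
move=> hT da db ab jump_a step_b hear_b.
have [_ _ pre_a beep_a] := fs_step_jump jump_a.
have pre_b : pre_checkpoint T (delta (fs_step T sb hb)).
  rewrite (fs_step_delta _ db) step_b.
  suff -> : (cnt sb + 1 + 1) %% T = delta sa by [].
  by rewrite da ab; congr (_ %% _); lia.
have listen_b := fs_step_pre_checkpoint_listen hT step_b pre_b.
rewrite (hear_b beep_a) fs_step_beep_cnt // jump_a.
by rewrite fs_step_hear_pre_checkpoint // step_b; split; lia.
Qed.

End OneStep.

Section Execution.
Variables (T : nat) (V : finType) (e : rel V) (adv : nat -> V -> bool).

Local Notation config := (config T e adv).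
Local Notation heard t u := [exists x, e u x && beeping (config t x)].

Lemma config_succ (t : nat) (u : V) (s : node) : config t u = Some s ->
  config t.+1 u = Some (fs_step T s (heard t u)).
Proof. by move=> cu; rewrite /= cu. Qed.

Lemma active_mono (t t2 : nat) (u : V) : t <= t2 ->
  active T e adv t u -> active T e adv t2 u.
Proof.
move=> /subnKC <-; elim: (t2 - t) => [|k IH]; first by rewrite addn0.
move/IH; rewrite /active addnS; case E: (config _ u) => [s|] // _.
by rewrite (config_succ E).
Qed.

Lemma active_config (t : nat) (u : V) : active T e adv t u ->
  exists s, config t u = Some s.
Proof. by rewrite /active; case: (config t u) => // s _; exists s. Qed.

Lemma config_delta (t : nat) (u : V) (s : node) : 1 < T ->
  config t u = Some s -> delta s = (cnt s + 1) %% T.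
Proof.
move=> hT; elim: t u s => [|t IH] u s /=.
  by case: (adv 0 u) => // -[<-]; rewrite /= modn_small.
case E: (config t u) => [s0|].
  by move=> [<-]; apply: fs_step_delta; apply: IH E.
by case: ifP => // _ [<-]; rewrite /= modn_small.
Qed.

Lemma hears_beeping_neighbor (t : nat) (a b : V) (sa : node) : e b a ->
  config t a = Some sa -> st sa = Beep -> heard t b.
Proof. by move=> ba ca beep; apply/existsP; exists a; rewrite ba ca /= beep. Qed.

Lemma dist_sym (t : nat) (a b : V) : dist T e adv t a b = dist T e adv t b a.
Proof. by rewrite /dist addnC. Qed.

Lemma catch_up (s : nat) (a b : V) (sa sb : node) : 1 < T -> e b a ->
  config s a = Some sa -> config s b = Some sb -> cnt sa = (cnt sb).+1 ->
  cnt (fs_step T sa (heard s a)) = cnt sa + 2 ->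
  cnt (fs_step T sb (heard s b)) = cnt sb + 1 ->
  dist T e adv s.+2 a b <= 1.
Proof.
move=> hT ba ca cb lead jump_a step_b.
have ca1 := config_succ ca; have cb1 := config_succ cb.
have [cnt_a cnt_b] := fs_step_catch_up (heard s.+1 a) (ltnW hT)
  (config_delta hT ca) (config_delta hT cb) lead jump_a step_b
  (hears_beeping_neighbor ba ca1).
by rewrite /dist /vcounter (config_succ ca1) (config_succ cb1) cnt_a cnt_b; lia.
Qed.

End Execution.

Theorem mainTheorem10 (T : nat) (V : finType) (e : rel V)
    (adv : nat -> V -> bool) (v w : V) (t t' : nat) :
  4 <= T ->
  symmetric e -> irreflexive e -> (forall x y, connect e x y) ->
  e v w ->
  active T e adv t v -> active T e adv t w ->
  dist T e adv t v w <= 1 ->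
  t < t' ->
  1 < dist T e adv t' v w ->
  (forall s, t < s < t' -> dist T e adv s v w <= 1) ->
  dist T e adv t'.+1 v w <= 1.
Proof.
move=> hT e_sym _ _ vw av aw close_t tt' far close_between.
(* s = t' - 1 is the last round in which v and w are within distance 1. *)
set s := t'.-1; have t's : t' = s.+1 by rewrite /s; lia.
rewrite t's in far *.
have ts : t <= s by lia.
have close : dist T e adv s v w <= 1.
  have [<- // | lt_ts] : t = s \/ t < s by lia.
  by apply: close_between; lia.
have [sv cv] := active_config (active_mono ts av).
have [sw cw] := active_config (active_mono ts aw).
rewrite /dist /vcounter cv cw in close.
rewrite /dist /vcounter (config_succ cv) (config_succ cw) in far.
have hT1 : 1 < T by lia.
(* The distance can only grow if the leader jumps by 2 and the follower
   adds 1; then the follower catches up in the next round. *)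
have [stv|stv] := fs_step_cnt T sv [exists x, e v x && beeping (config T e adv s x)];
have [stw|stw] := fs_step_cnt T sw [exists x, e w x && beeping (config T e adv s x)];
  rewrite ?stv ?stw in far; try lia.
- by rewrite dist_sym; apply: (catch_up hT1 vw cw cv) => //; lia.
- by apply: (catch_up hT1 _ cv cw) => //; [rewrite e_sym | lia].
Qed.
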